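(* Let $z_i=(y_i',x_i')'$, $i=1,\dots,n$, with $y_i\in\mathbb{R}^q$, $x_i\in\mathbb{R}^p$, be a sample satisfying the multivariate linear model $y_i=B_0'x_i+u_i$ ($B_0\in\mathbb{R}^{p\times q}$). Let $\rho_0,\rho_1$ be $\rho$-functions with $\rho_1\le\rho_0$, let $(\tilde B_n,\tilde\Sigma_n)\in\mathbb{R}^{p\times q}\times\mathcal{S}_q$ be initial estimates with $|\tilde\Sigma_n|=1$, let $\hat\sigma_n=s\big(d_1(\tilde B_n,\tilde\Sigma_n),\dots,d_n(\tilde B_n,\tilde\Sigma_n)\big)$ be the M-scale of the Mahalanobis norms computed with $\rho_0$ and $b=0.5$, and let $$S(B,\Gamma)=\sum_{i=1}^n\rho_1\!\left(\frac{d_i(B,\Gamma)}{\hat\sigma_n}\right).$$ Let $k_n=\max_{\|v\|+\|w\|>0}\#\{i: v'x_i+w'y_i=0\}$ ($v\in\mathbb{R}^p$, $w\in\mathbb{R}^q$). If $k_n/n<0.5$, then there exists a pair $(\hat B_n,\hat\Gamma_n)$ that minimizes $S(B,\Gamma)$ over all $(B,\Gamma)\in\mathbb{R}^{p\times q}\times\mathcal{S}_q$ with $|\Gamma|=1$.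
   Context: $\mathcal{S}_q$ denotes the set of positive definite symmetric $q\times q$ matrices and $|\cdot|$ the determinant. A $\rho$-function is a continuous nondecreasing function of $|u|$ with $\rho(0)=0$, $\sup_u\rho(u)=1$, and $\rho(u)$ strictly increasing for nonnegative $u$ with $\rho(u)<1$. For $B\in\mathbb{R}^{p\times q}$, $\Sigma\in\mathcal{S}_q$, the Mahalanobis norms of the residuals are $d_i(B,\Sigma)=\big((y_i-B'x_i)'\Sigma^{-1}(y_i-B'x_i)\big)^{1/2}$. Given $v=(v_1,\dots,v_n)$, the M-scale $s(v)$ (with $\rho$-function $\rho_0$ and $b\in(0,1)$) is the value $s$ solving $\frac1n\sum_{i=1}^n\rho_0(v_i/s)=b$, or $s=0$ if $\#\{i:v_i=0\}\ge n(1-b)$. *)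

From HB Require Import structures.
From mathcomp Require Import all_boot all_order all_algebra.
From mathcomp Require Import all_classical all_reals all_analysis.
Set Implicit Arguments. Unset Strict Implicit. Unset Printing Implicit Defensive.
Import Order.TTheory GRing.Theory Num.Theory.
Import numFieldNormedType.Exports.
Local Open Scope ring_scope.

Definition rho_function (R : realType) (rho : R -> R) : Prop :=
  [/\ continuous rho,
      (forall u v : R, `|u| <= `|v| -> rho u <= rho v),
      rho 0 = 0,
      (forall u : R, rho u <= 1) /\ (forall e : R, 0 < e -> exists u, 1 - e < rho u)
    & (forall u v : R, 0 <= u -> u < v -> rho u < 1 -> rho u < rho v)].

Definition posdef (R : realType) (q : nat) (S : 'M[R]_q) : Prop :=
  S^T = S /\ (forall v : 'cV[R]_q, v != 0 -> 0 < (v^T *m S *m v) ord0 ord0).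

Definition mahal (R : realType) (p q : nat) (x : 'cV[R]_p) (y : 'cV[R]_q)
    (B : 'M[R]_(p, q)) (Sigma : 'M[R]_q) : R :=
  let r := y - B^T *m x in Num.sqrt ((r^T *m invmx Sigma *m r) ord0 ord0).

Definition is_Mscale (R : realType) (n : nat) (rho0 : R -> R) (b : R)
    (v : 'I_n -> R) (s : R) : Prop :=
  if (n%:R * (1 - b) <= #|[set i | v i == 0]|%:R)
  then s = 0
  else 0 < s /\ n%:R^-1 * \sum_(i < n) rho0 (v i / s) = b.

Definition count_zero (R : realType) (n p q : nat) (x : 'I_n -> 'cV[R]_p)
    (y : 'I_n -> 'cV[R]_q) (v : 'cV[R]_p) (w : 'cV[R]_q) : nat :=
  #|[set i : 'I_n | v^T *m x i + w^T *m y i == 0]|.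

Definition k_n (R : realType) (n p q : nat) (x : 'I_n -> 'cV[R]_p)
    (y : 'I_n -> 'cV[R]_q) : nat :=
  \max_(k < n.+1 | `[< exists (v : 'cV[R]_p) (w : 'cV[R]_q),
                        (v != 0 \/ w != 0) /\ count_zero x y v w = k >]) k.

Definition S_obj (R : realType) (n p q : nat) (x : 'I_n -> 'cV[R]_p)
    (y : 'I_n -> 'cV[R]_q) (rho1 : R -> R) (sigma : R)
    (B : 'M[R]_(p, q)) (G : 'M[R]_q) : R :=
  \sum_(i < n) rho1 (mahal (x i) (y i) B G / sigma).

From HB Require Import structures.
From mathcomp Require Import all_boot all_order all_algebra.
From mathcomp Require Import all_classical all_reals all_analysis.
From mathcomp Require Import ring lra perm.
Import Order.TTheory GRing.Theory Num.Theory.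
Import numFieldNormedType.Exports.
Set Implicit Arguments. Unset Strict Implicit. Unset Printing Implicit Defensive.
Local Open Scope ring_scope.

(* Work with the precision matrix A = Gamma^-1: the constraint set
   {A psd, symmetric, det A = 1} is closed and the objective is continuous in
   (B, A).  For sigma > 0 the initial estimate has objective at most n/2,
   because rho1 <= rho0 and sigma is the M-scale with b = 1/2.  On the sublevel
   set {S <= n/2}, since n/2 < n - k_n and sup rho1 = 1, more than k_n
   residuals are uniformly A-small; by definition of k_n these sample points
   span R^(p+q), so the A-norms of all residuals, hence the diagonal of A and
   the A-norms of the rows of B, are bounded, and det A = 1 bounds B itself
   through the adjugate.  A bounded closed sublevel set is compact, so the
   minimum is attained. *)

Lemma ler_sum_term (R : numDomainType) (I : finType) (F : I -> R) i :
  (forall j, 0 <= F j) -> F i <= \sum_j F j.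
Proof. by move=> F_ge0; rewrite (bigD1 i) //= lerDl sumr_ge0. Qed.

Section EntrywiseContinuity.
Variables (R : realFieldType) (T : topologicalType).

Lemma continuous_sumr (I : Type) (r : seq I) (P : pred I) (f : I -> T -> R) :
  (forall i, continuous (f i)) -> continuous (fun t => \sum_(i <- r | P i) f i t).
Proof. by move=> cf; apply: continuous_big => [|i _]; [exact: add_continuous|exact: cf]. Qed.

Lemma continuous_prodr (I : Type) (r : seq I) (P : pred I) (f : I -> T -> R) :
  (forall i, continuous (f i)) -> continuous (fun t => \prod_(i <- r | P i) f i t).
Proof. by move=> cf; apply: continuous_big => [|i _]; [exact: mul_continuous|exact: cf]. Qed.

Definition mx_continuous m n (F : T -> 'M[R]_(m, n)) :=
  forall i j, continuous (fun t => F t i j).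

Lemma mx_continuous_cst m n (M : 'M[R]_(m, n)) : mx_continuous (fun=> M).
Proof. by move=> i j; exact: cst_continuous. Qed.

Lemma mx_continuousD m n (F G : T -> 'M[R]_(m, n)) :
  mx_continuous F -> mx_continuous G -> mx_continuous (fun t => F t + G t).
Proof.
move=> cF cG i j; under eq_fun do rewrite mxE.
by move=> t; exact: continuousD (cF i j t) (cG i j t).
Qed.

Lemma mx_continuousN m n (F : T -> 'M[R]_(m, n)) :
  mx_continuous F -> mx_continuous (fun t => - F t).
Proof.
by move=> cF i j; under eq_fun do rewrite mxE; move=> t; exact: continuousN (cF i j t).
Qed.

Lemma mx_continuous_tr m n (F : T -> 'M[R]_(m, n)) :
  mx_continuous F -> mx_continuous (fun t => (F t)^T).
Proof. by move=> cF i j; under eq_fun do rewrite mxE; exact: cF. Qed.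

Lemma mx_continuousM m n l (F : T -> 'M[R]_(m, n)) (G : T -> 'M[R]_(n, l)) :
  mx_continuous F -> mx_continuous G -> mx_continuous (fun t => F t *m G t).
Proof.
move=> cF cG i j; under eq_fun do rewrite mxE.
by apply: continuous_sumr => k t; exact: continuousM (cF i k t) (cG k j t).
Qed.

Lemma continuous_det n (F : T -> 'M[R]_n) :
  mx_continuous F -> continuous (fun t => \det (F t)).
Proof.
move=> cF; rewrite /determinant; apply: continuous_sumr => s.
have cprod : continuous (fun t => \prod_i F t i (s i)).
  by apply: continuous_prodr => i; exact: cF.
have csgn : continuous (fun _ : T => (-1) ^+ s : R) by exact: cst_continuous.
by move=> t; exact: continuousM (csgn t) (cprod t).
Qed.

End EntrywiseContinuity.

Section QuadraticForm.
Variables (R : realFieldType) (q : nat).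
Implicit Types (A : 'M[R]_q) (u w : 'cV[R]_q).

Definition bform A u w := (u^T *m A *m w) ord0 ord0.
Definition qform A u := bform A u u.
Definition psd A := forall u, 0 <= qform A u.

Lemma bformDl A u u' w : bform A (u + u') w = bform A u w + bform A u' w.
Proof. by rewrite /bform linearD /= !mulmxDl mxE. Qed.

Lemma bformDr A u w w' : bform A u (w + w') = bform A u w + bform A u w'.
Proof. by rewrite /bform mulmxDr mxE. Qed.

Lemma bformZl A a u w : bform A (a *: u) w = a * bform A u w.
Proof. by rewrite /bform linearZ /= -!scalemxAl mxE. Qed.

Lemma bformZr A a u w : bform A u (a *: w) = a * bform A u w.
Proof. by rewrite /bform -scalemxAr mxE. Qed.

Lemma bformNl A u w : bform A (- u) w = - bform A u w.
Proof. by rewrite -scaleN1r bformZl mulN1r. Qed.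

Lemma bformNr A u w : bform A u (- w) = - bform A u w.
Proof. by rewrite -scaleN1r bformZr mulN1r. Qed.

Lemma bformC A u w : A^T = A -> bform A u w = bform A w u.
Proof.
move=> sA; rewrite /bform.
have -> : (u^T *m A *m w) ord0 ord0 = (u^T *m A *m w)^T ord0 ord0 by rewrite [RHS]mxE.
by rewrite !trmx_mul trmxK sA mulmxA.
Qed.

Lemma bform_delta A j k : bform A (delta_mx j ord0) (delta_mx k ord0) = A j k.
Proof. by rewrite /bform -colE trmx_delta -rowE !mxE. Qed.

Lemma qformD A u w : qform A (u + w) = qform A u + bform A u w + bform A w u + qform A w.
Proof. by rewrite /qform bformDl !bformDr; lra. Qed.

Lemma qformN A u : qform A (- u) = qform A u.
Proof. by rewrite /qform bformNl bformNr opprK. Qed.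

Lemma qformZ A a u : qform A (a *: u) = a ^+ 2 * qform A u.
Proof. by rewrite /qform bformZl bformZr mulrA expr2. Qed.

Lemma qform0 A : qform A 0 = 0.
Proof. by rewrite /qform /bform mulmx0 mxE. Qed.

Section Psd.
Variable A : 'M[R]_q.
Hypothesis psdA : psd A.

Lemma qformD_le u w : qform A (u + w) <= 2 * qform A u + 2 * qform A w.
Proof. by have := psdA (u - w); rewrite !qformD qformN bformNr bformNl; lra. Qed.

Lemma qform_sum_le n (w : 'I_n -> 'cV[R]_q) :
  qform A (\sum_(i < n) w i) <= 2 ^+ n * \sum_(i < n) qform A (w i).
Proof.
elim: n w => [|n IH] w; first by rewrite !big_ord0 qform0 mulr0.
rewrite !big_ord_recl; apply: le_trans (qformD_le _ _) _.
rewrite exprS -mulrA !mulrDr; apply: lerD; last by rewrite ler_pM2l.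
by rewrite ler_pM2l // ler_peMl ?psdA // exprn_ege1 // ler1n.
Qed.

Hypothesis symA : A^T = A.

Lemma bform_norm_le u w : 2 * `|bform A u w| <= qform A u + qform A w.
Proof.
have := psdA (u + w); have := psdA (u - w).
rewrite !qformD qformN bformNr bformNl (bformC w u symA).
by case: (lerP 0 (bform A u w)) => [/ger0_norm|/ltr0_norm] ->; lra.
Qed.

Lemma psd_entry_le K : (forall k, A k k <= K) -> forall j k, `|A j k| <= K.
Proof.
move=> hK j k; have := bform_norm_le (delta_mx j ord0) (delta_mx k ord0).
by rewrite /qform !bform_delta; have := hK j; have := hK k; lra.
Qed.

Lemma psd_degenerate u : qform A u = 0 -> forall w, bform A u w = 0.
Proof.
move=> u0 w; apply/eqP/negPn/negP => b0.
pose t := - (qform A w + 1) / (2 * bform A u w).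
have := psdA (t *: u + w).
rewrite qformD qformZ bformZl bformZr (bformC w u symA) u0 mulr0 add0r.
have -> : t * bform A u w = - (qform A w + 1) / 2 by rewrite /t; field; rewrite b0.
lra.
Qed.

End Psd.

End QuadraticForm.

Lemma continuous_qform (R : realFieldType) (T : topologicalType) q
    (F : T -> 'M[R]_q) (G : T -> 'cV[R]_q) :
  mx_continuous F -> mx_continuous G -> continuous (fun t => qform (F t) (G t)).
Proof.
move=> cF cG; apply: (mx_continuousM (mx_continuousM (mx_continuous_tr cG) cF) cG).
Qed.

Section PositiveDefinite.
Variables (R : realType) (q : nat).
Implicit Types A : 'M[R]_q.

Lemma posdef_psd A : posdef A -> psd A.
Proof.
by case=> _ pA u; have [->|/pA/ltW //] := eqVneq u 0; rewrite qform0.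
Qed.

Lemma psd_posdef A : A^T = A -> psd A -> A \in unitmx -> posdef A.
Proof.
move=> sA pA uA; split=> // u u0; rewrite lt_def pA andbT.
apply: contra u0 => /eqP u0'; have degen := psd_degenerate pA sA u0'.
have uA0 : u^T *m A = 0.
  apply/rowP => k; rewrite [RHS]mxE -(degen (delta_mx k ord0)).
  by rewrite /bform -colE [RHS]mxE.
by rewrite -trmx_eq0 -(mulmxK uA u^T) uA0 mul0mx.
Qed.

Lemma posdef_unitmx A : posdef A -> A \in unitmx.
Proof.
case=> _ pA; rewrite unitmxE unitfE; apply/negP => /det0P [v v0 vA].
by have := pA v^T; rewrite trmx_eq0 trmxK vA mul0mx mxE ltxx => /(_ v0).
Qed.

Lemma posdef_invmx A : posdef A -> posdef (invmx A).
Proof.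
move=> pdA; have uA := posdef_unitmx pdA; case: pdA => sA pA.
split=> [|u u0]; first by rewrite trmx_inv sA.
have Au0 : invmx A *m u != 0 by apply: contra u0 => /eqP h; rewrite -(mulKVmx uA u) h mulmx0.
move: (pA _ Au0); congr (0 < _); rewrite trmx_mul trmx_inv sA.
by rewrite -!mulmxA (mulmxA A) mulmxV // mul1mx.
Qed.

End PositiveDefinite.

Section DeterminantBound.
Variable R : numDomainType.

Lemma norm_det_le m (M : 'M[R]_m) K : (forall i j, `|M i j| <= K) ->
  `|\det M| <= #|{perm 'I_m}|%:R * K ^+ m.
Proof.
move=> hM; rewrite /determinant; apply: le_trans (ler_norm_sum _ _ _) _.
rewrite mulr_natl -sumr_const; apply: ler_sum => s _.
rewrite normrM normr_sign mul1r normr_prod -[in leRHS](card_ord m) -prodr_const.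
by apply: ler_prod => i _; rewrite normr_ge0 hM.
Qed.

Lemma norm_adj_le m (M : 'M[R]_m) K : (forall i j, `|M i j| <= K) ->
  forall i j, `|\adj M i j| <= #|{perm 'I_m.-1}|%:R * K ^+ m.-1.
Proof.
move=> hM i j; rewrite mxE /cofactor normrM normrX normrN1 expr1n mul1r.
by apply: norm_det_le => a b; rewrite !mxE.
Qed.

End DeterminantBound.

Lemma psd_det1_coord_le (R : realFieldType) (q : nat) (A : 'M[R]_q) (b : 'cV[R]_q)
    Ka Kb :
  psd A -> A^T = A -> \det A = 1 -> (forall k, A k k <= Ka) -> qform A b <= Kb ->
  forall k, `|b k ord0| <= q%:R * (#|{perm 'I_q.-1}|%:R * Ka ^+ q.-1) * (Ka + Kb).
Proof.
move=> pA sA dA hKa hKb k.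
have uA : A \in unitmx by rewrite unitmxE dA unitr1.
have invA : invmx A = \adj A by rewrite /invmx uA dA invr1 scale1r.
set KG := #|{perm 'I_q.-1}|%:R * Ka ^+ q.-1.
rewrite -[b](mulKmx uA) invA mxE; apply: le_trans (ler_norm_sum _ _ _) _.
apply: le_trans (_ : _ <= \sum_(l < q) KG * (Ka + Kb)) _; last first.
  by rewrite sumr_const card_ord -[in leLHS]mulr_natl mulrA.
apply: ler_sum => l _.
rewrite normrM; apply: ler_pM => //; first exact/norm_adj_le/psd_entry_le.
have -> : (A *m b) l ord0 = bform A (delta_mx l ord0) b.
  by rewrite /bform trmx_delta -mulmxA -rowE [RHS]mxE.
have := bform_norm_le pA sA (delta_mx l ord0) b.
have := pA (delta_mx l ord0); have := pA b; have := hKa l; move: hKb.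
rewrite /qform bform_delta; lra.
Qed.

Section Spanning.
Variables (F : fieldType) (n p q : nat) (x : 'I_n -> 'cV[F]_p) (y : 'I_n -> 'cV[F]_q).

Definition spanning (I : {set 'I_n}) := forall (v : 'cV[F]_p) (w : 'cV[F]_q),
  (forall i, i \in I -> v^T *m x i + w^T *m y i = 0) -> v = 0 /\ w = 0.

Definition sample_on (I : {set 'I_n}) i : 'cV[F]_(p + q) :=
  if i \in I then col_mx (x i) (y i) else 0.

Lemma spanning_coefs I : spanning I ->
  exists C : 'M[F]_(n, p + q), forall u, u = \sum_i (C *m u) i ord0 *: sample_on I i.
Proof.
move=> spanI; pose Z : 'M[F]_(p + q, n) := \matrix_(k, i) sample_on I i k ord0.
have /row_freeP [C ZC] : row_free Z.
  apply: inj_row_free => r rZ.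
  have [v0 w0] : (lsubmx r)^T = 0 /\ (rsubmx r)^T = 0.
    apply: spanI => i iI; rewrite !trmxK -mul_row_col hsubmxK.
    have rZi : (r *m Z) ord0 i = 0 by rewrite rZ mxE.
    apply/rowP => a; rewrite ord1 [RHS]mxE -rZi !mxE.
    by apply: eq_bigr => k _; rewrite !mxE /sample_on iI !mxE.
  by rewrite -(hsubmxK r) -[lsubmx r]trmxK -[rsubmx r]trmxK v0 w0 !trmx0 row_mx0.
exists C => u; rewrite -{1}(mul1mx u) -ZC -mulmxA.
apply/colP => k; rewrite summxE mxE.
by apply: eq_bigr => i _; rewrite !mxE mulrC.
Qed.

End Spanning.

Section SpanningBound.
Variables (R : realFieldType) (n p q : nat) (x : 'I_n -> 'cV[R]_p) (y : 'I_n -> 'cV[R]_q).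

Definition residual (B : 'M[R]_(p, q)) i : 'cV[R]_q := y i - B^T *m x i.

Definition lin_residual (B : 'M[R]_(p, q)) (u : 'cV[R]_(p + q)) : 'cV[R]_q :=
  dsubmx u - B^T *m usubmx u.

Lemma lin_residual_sum B (a : 'I_n -> R) (z : 'I_n -> 'cV[R]_(p + q)) :
  lin_residual B (\sum_i a i *: z i) = \sum_i a i *: lin_residual B (z i).
Proof.
rewrite /lin_residual linear_sum linear_sum /= mulmx_sumr -sumrB.
by apply: eq_bigr => i _; rewrite linearZ linearZ /= -scalemxAr scalerBr.
Qed.

Lemma lin_residual_sample_on B I i :
  lin_residual B (sample_on x y I i) = if i \in I then residual B i else 0.
Proof.
rewrite /sample_on /lin_residual /residual.
case: (i \in I); first by rewrite col_mxKu col_mxKd.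
by rewrite linear0 linear0 mulmx0 subr0.
Qed.

Variables (I : {set 'I_n}) (C : 'M[R]_(n, p + q)) (M : R).
Hypothesis C_coefs : forall u, u = \sum_i (C *m u) i ord0 *: sample_on x y I i.

Definition coef_bound (u : 'cV[R]_(p + q)) :=
  2 ^+ n * \sum_i (C *m u) i ord0 ^+ 2 * M ^+ 2.

Lemma coef_bound_ge0 u : 0 <= coef_bound u.
Proof.
by rewrite mulr_ge0 ?exprn_ge0 // sumr_ge0 // => i _; rewrite mulr_ge0 ?sqr_ge0.
Qed.

Lemma qform_lin_residual_le B A : psd A ->
    (forall i, i \in I -> qform A (residual B i) <= M ^+ 2) ->
  forall u, qform A (lin_residual B u) <= coef_bound u.
Proof.
move=> pA hI u; rewrite {1}(C_coefs u) lin_residual_sum.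
apply: le_trans (qform_sum_le pA _) _; rewrite ler_pM2l ?exprn_gt0 //.
apply: ler_sum => i _; rewrite qformZ lin_residual_sample_on.
case: ifP => [iI|_]; first by apply: ler_wpM2l; [exact: sqr_ge0 | exact: hI].
by rewrite qform0 mulr0 mulr_ge0 ?sqr_ge0.
Qed.

Lemma bounded_of_coefs : exists K, forall (B : 'M[R]_(p, q)) (A : 'M[R]_q),
    psd A -> A^T = A -> \det A = 1 ->
    (forall i, i \in I -> qform A (residual B i) <= M ^+ 2) ->
  (forall j k, `|A j k| <= K) /\ (forall j k, `|B j k| <= K).
Proof.
(* lin_residual B (0; e_k) = e_k has A-norm A k k, and
   lin_residual B (e_j; 0) = - (row j B)^T. *)
pose Ky := \sum_k coef_bound (col_mx 0 (delta_mx k ord0)).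
pose Kx := \sum_j coef_bound (col_mx (delta_mx j ord0) 0).
pose KB := q%:R * (#|{perm 'I_q.-1}|%:R * Ky ^+ q.-1) * (Ky + Kx).
have Ky_ge0 : 0 <= Ky by apply: sumr_ge0 => k _; exact: coef_bound_ge0.
have Kx_ge0 : 0 <= Kx by apply: sumr_ge0 => k _; exact: coef_bound_ge0.
have KB_ge0 : 0 <= KB by rewrite !mulr_ge0 ?exprn_ge0 ?addr_ge0.
exists (Ky + KB) => B A pA sA dA hI; have hres := qform_lin_residual_le pA hI.
have diagA k : A k k <= Ky.
  have -> : A k k = qform A (lin_residual B (col_mx 0 (delta_mx k ord0))).
    by rewrite /lin_residual col_mxKu col_mxKd mulmx0 subr0 /qform bform_delta.
  by apply: le_trans (hres _) (ler_sum_term _ (fun l => coef_bound_ge0 _)).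
have normA := psd_entry_le pA sA diagA.
split=> j k; first by apply: le_trans (normA j k) _; rewrite lerDl.
pose b : 'cV[R]_q := B^T *m delta_mx j ord0.
have -> : B j k = b k ord0 by rewrite /b -colE !mxE.
apply: le_trans (psd_det1_coord_le (Kb := Kx) pA sA dA diagA _ k) _;
  last by rewrite -/KB lerDr.
rewrite -qformN.
have -> : - b = lin_residual B (col_mx (delta_mx j ord0) 0).
  by rewrite /lin_residual col_mxKu col_mxKd sub0r.
by apply: le_trans (hres _) (ler_sum_term _ (fun l => coef_bound_ge0 _)).
Qed.

End SpanningBound.

Section Minimization.
Local Open Scope classical_set_scope.

Lemma closed_preimage (T U : topologicalType) (f : T -> U) (E : set U) :
  continuous f -> closed E -> closed (f @^-1` E).
Proof. by move=> cf; apply: preimage_closed => t _; exact: cf. Qed.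

Lemma min_of_bounded_sublevel (R : realType) N (D : set 'rV[R]_N) (f : 'rV[R]_N -> R)
    v0 c :
  closed D -> continuous f -> D v0 -> f v0 <= c ->
  bounded_set [set v | D v /\ f v <= c] ->
  exists2 v, D v & forall w, D w -> f v <= f w.
Proof.
move=> clD cf Dv0 fv0c bddK.
have clK : closed [set v | D v /\ f v <= c].
  apply: closedI => //.
  by apply: (@closed_preimage _ _ f [set z | z <= c]) => //; exact: closed_le.
have [|v /set_mem [Dv fvc] minv] := compact_EVT_min _ (bounded_closed_compact bddK clK)
    (continuous_subspaceT cf); first by exists v0.
exists v => // w Dw; have [fwc|/ltW] := lerP (f w) c; first exact/minv/mem_set.
exact: le_trans.
Qed.

End Minimization.

(* Pairs (B, A) are packed into one row vector, the space on which the library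
   proves that bounded closed sets are compact. *)
Section Packing.
Local Open Scope classical_set_scope.
Variables (R : realType) (p q : nat).
Local Notation N := (p * q + q * q)%N.

Definition pack (B : 'M[R]_(p, q)) (A : 'M[R]_q) : 'rV[R]_N :=
  row_mx (mxvec B) (mxvec A).
Definition unpackB (v : 'rV[R]_N) : 'M[R]_(p, q) := vec_mx (lsubmx v).
Definition unpackA (v : 'rV[R]_N) : 'M[R]_q := vec_mx (rsubmx v).

Lemma unpackB_pack B A : unpackB (pack B A) = B.
Proof. by rewrite /unpackB row_mxKl mxvecK. Qed.

Lemma unpackA_pack B A : unpackA (pack B A) = A.
Proof. by rewrite /unpackA row_mxKr mxvecK. Qed.

Lemma pack_unpack v : pack (unpackB v) (unpackA v) = v.
Proof. by rewrite /pack !vec_mxK hsubmxK. Qed.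

Lemma mx_continuous_unpackB : mx_continuous unpackB.
Proof. by move=> i j; under eq_fun do rewrite !mxE; exact: coord_continuous. Qed.

Lemma mx_continuous_unpackA : mx_continuous unpackA.
Proof. by move=> i j; under eq_fun do rewrite !mxE; exact: coord_continuous. Qed.

Lemma norm_pack_le (B : 'M[R]_(p, q)) (A : 'M[R]_q) K : 0 <= K ->
  (forall i j, `|B i j| <= K) -> (forall i j, `|A i j| <= K) -> `|pack B A| <= K.
Proof.
move=> K0 hB hA; rewrite [leLHS]/Num.Def.normr /= mx_normrE.
apply: bigmax_le => // -[a k] _ /=; rewrite ord1 /pack.
case: (splitP k) => [j kj|j kj].
  rewrite (_ : k = lshift _ j); last exact: val_inj.
  by case: (mxvec_indexP j) => i i'; rewrite row_mxEl mxvecE.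
rewrite (_ : k = rshift _ j); last exact: val_inj.
by case: (mxvec_indexP j) => i i'; rewrite row_mxEr mxvecE.
Qed.

Definition feasible : set 'rV[R]_N :=
  [set v | [/\ psd (unpackA v), (unpackA v)^T = unpackA v & \det (unpackA v) = 1]].

Lemma closed_feasible : closed feasible.
Proof.
have -> : feasible =
    (\bigcap_(u in [set: 'cV[R]_q]) [set v | 0 <= qform (unpackA v) u]) `&`
    (\bigcap_(jk in [set: 'I_q * 'I_q])
       [set v | unpackA v jk.2 jk.1 - unpackA v jk.1 jk.2 = 0]) `&`
    [set v | \det (unpackA v) = 1].
  apply/seteqP; split=> v /=.
    by case=> pA sA dA; split=> //; split=> [u _|[j k] _] //=; rewrite -{1}sA mxE subrr.
  case=> -[pA sA] dA; split=> // [u|]; first exact: pA.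
  by apply/matrixP => j k; apply/eqP; rewrite mxE -subr_eq0; apply/eqP/(sA (j, k)).
apply: closedI; first apply: closedI.
- apply: closed_bigI => u _.
  apply: (@closed_preimage _ _ (fun v => qform (unpackA v) u) [set z | 0 <= z]).
    exact: continuous_qform mx_continuous_unpackA (mx_continuous_cst (M := u)).
  exact: closed_ge.
- apply: closed_bigI => -[j k] _.
  apply: (@closed_preimage _ _ (fun v => unpackA v k j - unpackA v j k) [set z | z = 0]).
    move=> t; exact: continuousB (@mx_continuous_unpackA k j t) (@mx_continuous_unpackA j k t).
  exact: closed_eq.
- apply: (@closed_preimage _ _ (fun v => \det (unpackA v)) [set z | z = 1]).
    exact/continuous_det/mx_continuous_unpackA.
  exact: closed_eq.
Qed.

End Packing.

Section Sublevel.
Variables (R : realType) (n p q : nat) (x : 'I_n -> 'cV[R]_p) (y : 'I_n -> 'cV[R]_q).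
Variables (rho1 : R -> R) (sigma c : R).
Hypotheses (rho1P : rho_function rho1) (sigma_gt0 : 0 < sigma).
Hypotheses (c_ge0 : 0 <= c) (c_lt : c < n%:R - (k_n x y)%:R).

Definition obj (B : 'M[R]_(p, q)) (A : 'M[R]_q) :=
  \sum_i rho1 (Num.sqrt (qform A (residual x y B i)) / sigma).

Lemma spanning_of_kn_lt (I : {set 'I_n}) : (k_n x y < #|I|)%N -> spanning x y I.
Proof.
move=> kI v w vwI; apply: contrapT => /not_andP vw0; move: kI; apply/negP.
rewrite -leqNgt; apply: (@leq_trans (count_zero x y v w)).
  by apply/subset_leq_card/fintype.subsetP => i iI; rewrite inE vwI.
have cz_lt : (count_zero x y v w < n.+1)%N by rewrite ltnS -[leqRHS]card_ord max_card.
rewrite /k_n; apply: (@leq_bigmax_cond _ _ _ (Ordinal cz_lt)); apply/asboolP.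
by exists v, w; split=> //; case: vw0 => /eqP; [left|right].
Qed.

Lemma many_small_residuals : exists M, forall B A, psd A -> obj B A <= c ->
  exists I : {set 'I_n}, (k_n x y < #|I|)%N /\
    forall i, i \in I -> qform A (residual x y B i) <= M ^+ 2.
Proof.
(* Pick u with rho1 u * (n - k_n) > c: if at most k_n residuals were below
   sigma |u|, the remaining n - k_n terms of obj would already exceed c. *)
case: rho1P => _ rho_mono rho0 [_ rho_sup] _.
have rho_ge0 z : 0 <= rho1 z by rewrite -rho0; apply: rho_mono; rewrite normr0.
have ck := c_lt; set k := k_n x y in ck *.
have nk_gt0 : 0 < n%:R - k%:R :> R := le_lt_trans c_ge0 ck.
have [u rho_u] : exists u, c < rho1 u * (n%:R - k%:R).
  have [|u hu] := rho_sup (1 - c / (n%:R - k%:R)).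
    by rewrite subr_gt0 ltr_pdivrMr // mul1r.
  by exists u; rewrite -ltr_pdivrMr //; lra.
exists (sigma * `|u|) => B A pA objc.
pose I := [set i | Num.sqrt (qform A (residual x y B i)) <= sigma * `|u|].
exists I; split=> [|i]; last first.
  rewrite inE => hi; rewrite -(sqr_sqrtr (pA (residual x y B i))).
  by rewrite !expr2; apply: ler_pM => //; rewrite sqrtr_ge0.
rewrite ltnNge; apply/negP => Ik; rewrite -(ler_nat R) in Ik.
have big_resid i : i \notin I ->
    rho1 u <= rho1 (Num.sqrt (qform A (residual x y B i)) / sigma).
  rewrite inE -ltNge => hi; apply: rho_mono.
  rewrite [leRHS]ger0_norm; last by rewrite divr_ge0 ?sqrtr_ge0 ?ltW.
  by rewrite ler_pdivlMr // mulrC ltW.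
have : rho1 u * (n%:R - #|I|%:R) <= c.
  apply: le_trans objc; rewrite /obj (bigID (mem I)) /= -[leLHS]add0r.
  apply: lerD; first by apply: sumr_ge0 => j _.
  have -> : n%:R = #|I|%:R + #|[predC I]|%:R :> R by rewrite -natrD cardC card_ord.
  rewrite addrAC subrr add0r.
  by apply: le_trans (ler_sum _ big_resid); rewrite sumr_const mulr_natr.
by have := rho_ge0 u; nra.
Qed.

Lemma sublevel_entries_bounded : exists K, forall B A,
    psd A -> A^T = A -> \det A = 1 -> obj B A <= c ->
  (forall j k, `|A j k| <= K) /\ (forall j k, `|B j k| <= K).
Proof.
(* The spanning set I depends on (B, A): sum the bounds over all subsets. *)
have [M smallM] := many_small_residuals.
have KI (I : {set 'I_n}) : exists K : R, (k_n x y < #|I|)%N -> forall B A,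
    psd A -> A^T = A -> \det A = 1 ->
    (forall i, i \in I -> qform A (residual x y B i) <= M ^+ 2) ->
  (forall j k, `|A j k| <= K) /\ (forall j k, `|B j k| <= K).
  have [kI|] := ltnP (k_n x y) #|I|; last by exists 0.
  have [C C_coefs] := spanning_coefs (spanning_of_kn_lt kI).
  by have [K hK] := bounded_of_coefs M C_coefs; exists K.
have [K hK] := fin_all_exists KI.
exists (\sum_I `|K I|) => B A pA sA dA objc.
have [I [kI smallI]] := smallM B A pA objc.
have KI_le : K I <= \sum_J `|K J|.
  exact: le_trans (ler_norm _) (ler_sum_term I (fun J => normr_ge0 (K J))).
have [hA hB] := hK I kI B A pA sA dA smallI.
by split=> j k; [exact: le_trans (hA j k) KI_le | exact: le_trans (hB j k) KI_le].
Qed.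

Lemma continuous_obj : continuous (fun v => obj (unpackB v) (unpackA v)).
Proof.
case: rho1P => rho_cont _ _ _ _; apply: continuous_sumr => i.
have cq : continuous (fun v => qform (unpackA v) (residual x y (unpackB v) i)).
  apply: (continuous_qform (@mx_continuous_unpackA R p q)).
  apply: mx_continuousD; first exact: mx_continuous_cst.
  exact/mx_continuousN/mx_continuousM/mx_continuous_cst/mx_continuous_tr/mx_continuous_unpackB.
set d := fun v => Num.sqrt (qform (unpackA v) (residual x y (unpackB v) i)).
have cs : continuous d by move=> t; exact: continuous_comp (cq t) (@sqrt_continuous _ _).
have cinv : continuous (fun _ : 'rV[R]_(p * q + q * q) => sigma^-1).
  exact: cst_continuous.
have cd : continuous (fun v => d v / sigma) by move=> t; exact: continuousM (cs t) (cinv t).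
by move=> t; exact: continuous_comp (cd t) (rho_cont _).
Qed.

Lemma obj_min B0 A0 : posdef A0 -> \det A0 = 1 -> obj B0 A0 <= c ->
  exists B A, [/\ posdef A, \det A = 1 &
    forall B' A', posdef A' -> \det A' = 1 -> obj B A <= obj B' A'].
Proof.
move=> pdA0 dA0 obj0; have [K bddK] := sublevel_entries_bounded.
have feas0 : feasible (pack B0 A0).
  by rewrite /feasible /= unpackA_pack; split=> //; [exact: posdef_psd | case: pdA0].
have obj0' : obj (unpackB (pack B0 A0)) (unpackA (pack B0 A0)) <= c.
  by rewrite unpackA_pack unpackB_pack.
have bdd : bounded_set [set v | feasible v /\ obj (unpackB v) (unpackA v) <= c]%classic.
  exists `|K|; split=> [|M KM v [[pA sA dA] objv]]; first exact: normr_real.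
  apply: le_trans (ltW KM).
  have [hA hB] := bddK _ _ pA sA dA objv.
  by rewrite -[v]pack_unpack; apply: norm_pack_le => // i j; exact: le_trans (ler_norm _).
have [v [pA sA dA] minv] :=
  min_of_bounded_sublevel (@closed_feasible R p q) continuous_obj feas0 obj0' bdd.
exists (unpackB v), (unpackA v); split=> //.
  by apply: psd_posdef => //; rewrite unitmxE dA unitr1.
move=> B A pdA dA'; have := minv (pack B A).
rewrite /feasible /= !unpackA_pack unpackB_pack; apply; split=> //.
  exact: posdef_psd.
by case: pdA.
Qed.

End Sublevel.

Lemma posdef1 (R : realType) (q : nat) : posdef (1%:M : 'M[R]_q).
Proof.
apply: psd_posdef; [exact: trmx1 | | exact: unitmx1].
move=> u; rewrite /qform /bform mulmx1 mxE; apply: sumr_ge0 => k _.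
by rewrite !mxE -expr2 sqr_ge0.
Qed.

Lemma Mscale_cases (R : realType) (n : nat) (rho : R -> R) b (v : 'I_n -> R) s :
  is_Mscale rho b v s ->
  s = 0 \/ [/\ 0 < s, (0 < n)%N & \sum_i rho (v i / s) = n%:R * b].
Proof.
rewrite /is_Mscale; case: ifP => [_|degen [s_gt0 mean_b]]; [by left | right].
have n_gt0 : (0 < n)%N by case: n v degen {mean_b} => // v; rewrite mul0r ler0n.
by split=> //; rewrite -mean_b mulrA mulfV ?mul1r // pnatr_eq0 -lt0n.
Qed.

Lemma S_obj_invmx (R : realType) (n p q : nat) (x : 'I_n -> 'cV[R]_p)
    (y : 'I_n -> 'cV[R]_q) rho1 sigma B G :
  S_obj x y rho1 sigma B G = obj x y rho1 sigma B (invmx G).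
Proof. by []. Qed.

Theorem theorem1 (R : realType) (n p q : nat)
    (x : 'I_n -> 'cV[R]_p) (y : 'I_n -> 'cV[R]_q)
    (rho0 rho1 : R -> R)
    (Btil : 'M[R]_(p, q)) (Sigtil : 'M[R]_q) (sigma : R) :
  rho_function rho0 -> rho_function rho1 ->
  (forall u, rho1 u <= rho0 u) ->
  posdef Sigtil -> \det Sigtil = 1 ->
  is_Mscale rho0 (1 / 2) (fun i => mahal (x i) (y i) Btil Sigtil) sigma ->
  (k_n x y)%:R / n%:R < 1 / 2 :> R ->
  exists (Bh : 'M[R]_(p, q)) (Gh : 'M[R]_q),
    [/\ posdef Gh, \det Gh = 1 &
        forall (B : 'M[R]_(p, q)) (G : 'M[R]_q), posdef G -> \det G = 1 ->
          S_obj x y rho1 sigma Bh Gh <= S_obj x y rho1 sigma B G].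
Proof.
move=> _ rho1P rho10 pdS dS Mscale kn_lt.
have [->|[s_gt0 n_gt0 sum_rho0]] := Mscale_cases Mscale.
  (* Every term is rho1 (d / 0) = rho1 0 = 0. *)
  exists 0, 1%:M; split=> [||B G _ _]; [exact: posdef1 | exact: det1 |].
  by case: rho1P => _ _ rho1_0 _ _; rewrite /S_obj !big1 // => i _; rewrite invr0 mulr0.
have det_invmx (G : 'M[R]_q) : \det G = 1 -> \det (invmx G) = 1.
  by move=> dG; rewrite det_inv dG invr1.
have c_ge0 : 0 <= n%:R / 2 :> R by rewrite divr_ge0 ?ler0n.
have c_lt : n%:R / 2 < n%:R - (k_n x y)%:R :> R.
  by move: kn_lt; rewrite ltr_pdivrMr ?ltr0n //; lra.
have obj0 : obj x y rho1 sigma Btil (invmx Sigtil) <= n%:R / 2.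
  change (S_obj x y rho1 sigma Btil Sigtil <= n%:R / 2).
  by rewrite -[_ / 2]mul1r mulrCA -sum_rho0; apply: ler_sum.
have [Bh [Ah [pdAh dAh minh]]] :=
  obj_min rho1P s_gt0 c_ge0 c_lt (posdef_invmx pdS) (det_invmx _ dS) obj0.
exists Bh, (invmx Ah); split; [exact: posdef_invmx | exact: det_invmx |].
move=> B G pdG dG; rewrite !S_obj_invmx invmxK.
exact: minh (posdef_invmx pdG) (det_invmx _ dG).
Qed.
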